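(* Let $S'$ be a martingale on $2^{<\omega}$ with $\mathrm{Var}(S'\mid\bot)<\infty$, and let $c>S'(\bot)$. Then for every real $\hat c\ge 0$ there exists a martingale $S$ such that $S(\bot)<c$, $S(\rho)>S'(\rho)$ for all $\rho\in2^{<\omega}$, and for some $t\in\omega$, $S(\rho)>S'(\rho)+\hat c\sqrt{\mathrm{Var}(S'\mid\rho)}$ for all $\rho\in 2^t$.
   Context: A martingale is a function $S:2^{<\omega}\to\mathbb{R}^{\ge0}$ with $2S(\rho)=S(\rho0)+S(\rho1)$ for all $\rho$; $\bot$ is the empty string. For a martingale $S$ and $\rho\in2^{<\omega}$, $\mathrm{Var}(S\mid\rho)=\lim_{t\to\infty}2^{-(t-|\rho|)}\sum_{\sigma\in 2^t,\ \sigma\succeq\rho}(S(\sigma)-S(\rho))^2$. *)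

From Stdlib Require Import Reals List.
From Coquelicot Require Import Coquelicot.
Open Scope R_scope.

(* Binary strings 2^{<omega} are lists of booleans; rho0 = rho ++ [false],
   rho1 = rho ++ [true]; bot = nil. *)
Definition bstr := list bool.

Fixpoint strings (t : nat) : list bstr :=
  match t with
  | O => nil :: nil
  | S t' => flat_map (fun s => (s ++ false :: nil) :: (s ++ true :: nil) :: nil) (strings t')
  end.

Fixpoint prefixb (rho sigma : bstr) : bool :=
  match rho, sigma with
  | nil, _ => true
  | a :: r, b :: s => Bool.eqb a b && prefixb r s
  | _ :: _, nil => false
  end.

Definition sumR (l : list R) : R := fold_right Rplus 0 l.

Definition martingale (S : bstr -> R) : Prop :=
  forall rho, 0 <= S rho /\ 2 * S rho = S (rho ++ false :: nil) + S (rho ++ true :: nil).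

(* Var(S | rho) = lim_t 2^{-(t-|rho|)} sum_{sigma in 2^t, sigma extends rho} (S sigma - S rho)^2,
   as an extended real (the sequence is nondecreasing for t >= |rho|; for t < |rho|
   the sum is empty). *)
Definition CondVar (S : bstr -> R) (rho : bstr) : Rbar :=
  Lim_seq (fun t =>
    / 2 ^ (t - length rho) *
    sumR (map (fun sigma => (S sigma - S rho) ^ 2)
              (filter (prefixb rho) (strings t)))).

(* Var(S' | rho) is the limit of the partial variances V_m(rho), the mean of
   (S'(rho s) - S'(rho))^2 over |s| = m.  Orthogonality of martingale increments
   gives V_(T+m)(bot) = V_T(bot) + mean_(|t| = T) V_m(t), so the mean of Var(S' | t)
   over 2^T is at most Var(S' | bot) - V_T(bot), which tends to 0.  Put
   F(t) = eps/4 + chat sqrt(Var(S' | t)) on 2^T and let D be the martingale that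
   takes the values F on level T (averages above it, is constant along each
   extension below it).  Then S = S' + D works: by Jensen, D(bot) = mean F is at
   most eps/4 + chat sqrt(mean Var) < eps = c - S'(bot) once T is large. *)

From Stdlib Require Import Reals List Lia Lra.
From Coquelicot Require Import Coquelicot.
Open Scope R_scope.

Lemma strings_S m :
  strings (S m) = map (cons false) (strings m) ++ map (cons true) (strings m).
Proof.
  set (step := fun s : bstr => (s ++ false :: nil) :: (s ++ true :: nil) :: nil).
  assert (step_cons : forall b l, flat_map step (map (cons b) l) = map (cons b) (flat_map step l)).
  { intros b l; induction l as [|x l IHl]; simpl; [reflexivity|]. now rewrite IHl. }
  induction m as [|m IH]; [reflexivity|].
  change (strings (S (S m))) with (flat_map step (strings (S m))).
  rewrite IH at 1. rewrite flat_map_app, !step_cons. reflexivity.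
Qed.

Lemma length_strings T t : In t (strings T) -> length t = T.
Proof.
  revert t; induction T as [|T IH]; intros t Ht.
  - destruct Ht as [<-|[]]; reflexivity.
  - rewrite strings_S in Ht. apply in_app_or in Ht.
    destruct Ht as [Ht|Ht]; apply in_map_iff in Ht; destruct Ht as [s [<- Hs]];
      simpl; f_equal; auto.
Qed.

Lemma filter_prefixb_strings r m :
  filter (prefixb r) (strings (length r + m)) = map (app r) (strings m).
Proof.
  induction r as [|b r IH].
  - simpl. rewrite map_id. induction (strings m) as [|s l IHl]; simpl; congruence.
  - assert (filter_cons : forall b' l, filter (prefixb (b :: r)) (map (cons b') l) =
        if Bool.eqb b b' then map (cons b') (filter (prefixb r) l) else nil).
    { intros b' l. induction l as [|x l IHl]; cbn [map filter].
      - now destruct (Bool.eqb b b').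
      - rewrite IHl. destruct b, b'; simpl; now destruct (prefixb r x). }
    change (length (b :: r) + m)%nat with (S (length r + m)).
    rewrite strings_S, filter_app, !filter_cons, IH.
    destruct b; simpl; rewrite ?app_nil_r, map_map; reflexivity.
Qed.

Lemma sumR_app l1 l2 : sumR (l1 ++ l2) = sumR l1 + sumR l2.
Proof. induction l1 as [|x l IH]; simpl; [ring|]. unfold sumR in *; simpl. rewrite IH. ring. Qed.

Definition avg (m : nat) (G : bstr -> R) : R := / 2 ^ m * sumR (map G (strings m)).

Lemma avg_0 G : avg 0 G = G nil.
Proof. unfold avg, sumR; simpl. field. Qed.

Lemma avg_S m G :
  avg (S m) G = (avg m (fun s => G (false :: s)) + avg m (fun s => G (true :: s))) / 2.
Proof.
  unfold avg. rewrite strings_S, map_app, sumR_app, !map_map.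
  assert (2 ^ m <> 0) by (apply pow_nonzero; lra).
  simpl pow. unfold bstr in *. field. assumption.
Qed.

Lemma avg_ext m G H : (forall s, G s = H s) -> avg m G = avg m H.
Proof. intros E. unfold avg. do 2 f_equal. now apply map_ext. Qed.

Lemma avg_le m G H : (forall s, G s <= H s) -> avg m G <= avg m H.
Proof.
  revert G H; induction m as [|m IH]; intros G H E.
  - rewrite !avg_0; auto.
  - rewrite !avg_S.
    assert (IH0 := IH (fun s => G (false :: s)) (fun s => H (false :: s)) (fun s => E _)).
    assert (IH1 := IH (fun s => G (true :: s)) (fun s => H (true :: s)) (fun s => E _)).
    lra.
Qed.

Lemma avg_affine m G H a b : avg m (fun s => a * G s + H s + b) = a * avg m G + avg m H + b.
Proof.
  revert G H; induction m as [|m IH]; intros G H.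
  - now rewrite !avg_0.
  - rewrite !avg_S, !IH. lra.
Qed.

Lemma avg_const m b : avg m (fun _ => b) = b.
Proof. induction m as [|m IH]; [apply avg_0 | rewrite avg_S, IH; lra]. Qed.

Lemma avg_app T m G : avg (T + m) G = avg T (fun t => avg m (fun s => G (t ++ s))).
Proof.
  revert G; induction T as [|T IH]; intros G.
  - now rewrite avg_0.
  - change (S T + m)%nat with (S (T + m)). now rewrite !avg_S, !IH.
Qed.

Lemma is_lim_seq_avg T (G : nat -> bstr -> R) (g : bstr -> R) :
  (forall t, is_lim_seq (fun n => G n t) (g t)) ->
  is_lim_seq (fun n => avg T (G n)) (avg T g).
Proof.
  revert G g; induction T as [|T IH]; intros G g HG.
  - rewrite avg_0. eapply is_lim_seq_ext; [|apply HG]. intros; now rewrite avg_0.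
  - rewrite avg_S. eapply is_lim_seq_ext; [intros n; symmetry; apply avg_S|].
    apply (is_lim_seq_scal_r _ (/ 2) (Finite _)), is_lim_seq_plus'.
    + apply (IH (fun n s => G n (false :: s))); auto.
    + apply (IH (fun n s => G n (true :: s))); auto.
Qed.

Lemma avg_sqrt_le m G :
  (forall s, 0 <= G s) -> avg m (fun s => sqrt (G s)) <= sqrt (avg m G).
Proof.
  intros HG. set (a := avg m (fun s => sqrt (G s))).
  assert (Ha : 0 <= a).
  { rewrite <- (avg_const m 0). apply avg_le. intros; apply sqrt_pos. }
  assert (Hdev : 0 <= avg m G - a ^ 2).
  { replace (avg m G - a ^ 2) with (avg m (fun s => (sqrt (G s) - a) ^ 2)).
    - rewrite <- (avg_const m 0). apply avg_le. intros; apply pow2_ge_0.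
    - rewrite (avg_ext m _ (fun s => (- 2 * a) * sqrt (G s) + G s + a ^ 2)).
      + rewrite avg_affine. fold a. ring.
      + intros s. rewrite <- (sqrt_sqrt (G s) (HG s)) at 3. ring. }
  rewrite <- (sqrt_pow2 a Ha). apply sqrt_le_1_alt. lra.
Qed.

(* Fatou's lemma for the uniform average, with [real] sending an infinite limit to 0. *)
Lemma avg_real_Lim_seq_le T (u : bstr -> nat -> R) M :
  (forall t, ex_lim_seq (u t)) -> (forall t n, 0 <= u t n) ->
  (forall n, avg T (fun t => u t n) <= M) ->
  avg T (fun t => real (Lim_seq (u t))) <= M.
Proof.
  intros Hex Hpos HM.
  set (v := fun n t => match Lim_seq (u t) with Finite _ => u t n | _ => 0 end).
  assert (Hv : forall t, is_lim_seq (fun n => v n t) (real (Lim_seq (u t)))).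
  { intros t. unfold v. pose proof (Lim_seq_correct _ (Hex t)) as Hl.
    destruct (Lim_seq (u t)); [exact Hl | apply is_lim_seq_const | apply is_lim_seq_const]. }
  assert (Hvu : forall n, avg T (v n) <= M).
  { intros n. eapply Rle_trans; [|apply (HM n)]. apply avg_le. intros t. unfold v.
    destruct (Lim_seq (u t)); auto using Rle_refl. }
  exact (is_lim_seq_le _ (fun _ => M) _ _ Hvu (is_lim_seq_avg T _ _ Hv) (is_lim_seq_const _)).
Qed.

Definition partial_var (X : bstr -> R) (r : bstr) (m : nat) : R :=
  avg m (fun s => (X (r ++ s) - X r) ^ 2).

Lemma CondVar_partial_var X r : CondVar X r = Lim_seq (partial_var X r).
Proof.
  unfold CondVar. rewrite <- (Lim_seq_incr_n _ (length r)).
  apply Lim_seq_ext; intro n.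
  replace (n + length r - length r)%nat with n by lia.
  rewrite Nat.add_comm, filter_prefixb_strings, map_map. reflexivity.
Qed.

Lemma partial_var_ge0 X r m : 0 <= partial_var X r m.
Proof.
  unfold partial_var. rewrite <- (avg_const m 0). apply avg_le. intros; apply pow2_ge_0.
Qed.

Lemma martingale_avg X : martingale X -> forall m a, avg m (fun s => X (a ++ s)) = X a.
Proof.
  intros HX m; induction m as [|m IH]; intros a.
  - now rewrite avg_0, app_nil_r.
  - rewrite avg_S.
    rewrite (avg_ext m _ (fun s => X ((a ++ false :: nil) ++ s)))
      by (intros; now rewrite <- app_assoc).
    rewrite (avg_ext m (fun s => X (a ++ true :: s)) (fun s => X ((a ++ true :: nil) ++ s)))
      by (intros; now rewrite <- app_assoc).
    rewrite !IH. destruct (HX a). lra.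
Qed.

Lemma avg_sq_dev X : martingale X -> forall m a x,
  avg m (fun s => (X (a ++ s) - x) ^ 2) = partial_var X a m + (X a - x) ^ 2.
Proof.
  intros HX m a x.
  rewrite (avg_ext m _ (fun s => (2 * (X a - x)) * X (a ++ s) + (X (a ++ s) - X a) ^ 2
      + ((X a - x) ^ 2 - 2 * (X a - x) * X a))) by (intros; ring).
  rewrite avg_affine, martingale_avg by assumption. unfold partial_var. ring.
Qed.

Lemma partial_var_add X : martingale X -> forall r T m,
  partial_var X r (T + m) = partial_var X r T + avg T (fun t => partial_var X (r ++ t) m).
Proof.
  intros HX r T m. unfold partial_var at 1. rewrite avg_app.
  rewrite (avg_ext T _ (fun t => 1 * partial_var X (r ++ t) m + (X (r ++ t) - X r) ^ 2 + 0)).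
  - rewrite avg_affine. unfold partial_var at 2. ring.
  - intros t. rewrite Rmult_1_l, Rplus_0_r, <- avg_sq_dev by assumption.
    apply avg_ext. intros s. now rewrite app_assoc.
Qed.

Lemma partial_var_incr X : martingale X -> forall r n, partial_var X r n <= partial_var X r (S n).
Proof.
  intros HX r n. replace (S n) with (n + 1)%nat by lia. rewrite partial_var_add by assumption.
  assert (0 <= avg n (fun t => partial_var X (r ++ t) 1)).
  { rewrite <- (avg_const n 0). apply avg_le. intros; apply partial_var_ge0. }
  lra.
Qed.

Lemma real_CondVar_ge0 X r : 0 <= real (CondVar X r).
Proof.
  rewrite CondVar_partial_var.
  assert (H : Rbar_le (Lim_seq (fun _ => 0)) (Lim_seq (partial_var X r))).
  { apply Lim_seq_le_loc. exists O. intros; apply partial_var_ge0. }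
  rewrite Lim_seq_const in H.
  destruct (Lim_seq (partial_var X r)); simpl in *; auto using Rle_refl.
Qed.

Lemma avg_CondVar_le X r T L : martingale X ->
  (forall n, partial_var X r n <= L) ->
  avg T (fun t => real (CondVar X (r ++ t))) <= L - partial_var X r T.
Proof.
  intros HX HL.
  rewrite (avg_ext T _ (fun t => real (Lim_seq (partial_var X (r ++ t)))))
    by (intros; now rewrite CondVar_partial_var).
  apply avg_real_Lim_seq_le.
  - intros t. apply ex_lim_seq_incr, partial_var_incr, HX.
  - intros; apply partial_var_ge0.
  - intros n. specialize (HL (T + n)%nat). rewrite partial_var_add in HL by assumption. lra.
Qed.

Lemma avg_CondVar_vanishes X r : martingale X -> Rbar_lt (CondVar X r) p_infty ->
  forall gam, 0 < gam -> exists T, avg T (fun t => real (CondVar X (r ++ t))) < gam.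
Proof.
  intros HX Hfin gam Hgam.
  assert (Hincr := partial_var_incr X HX r).
  pose proof (Lim_seq_correct _ (ex_lim_seq_incr _ Hincr)) as Hlim.
  rewrite CondVar_partial_var in Hfin.
  destruct (Lim_seq (partial_var X r)) as [L| |]; simpl in Hfin; try contradiction.
  2:{ destruct (is_lim_seq_le (fun _ => 0) _ 0 m_infty (partial_var_ge0 X r)
               (is_lim_seq_const 0) Hlim). }
  assert (Hbound := is_lim_seq_incr_compare _ _ Hlim Hincr).
  apply is_lim_seq_spec in Hlim. destruct (Hlim (mkposreal gam Hgam)) as [T HT].
  specialize (HT T (le_n T)). simpl in HT. apply Rabs_def2 in HT.
  exists T. assert (H := avg_CondVar_le X r T L HX Hbound). lra.
Qed.

Definition mart_at_level (F : bstr -> R) (T : nat) (r : bstr) : R :=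
  if Nat.leb T (length r) then F (firstn T r) else avg (T - length r) (fun s => F (r ++ s)).

Lemma mart_at_level_above F T r : (length r <= T)%nat ->
  mart_at_level F T r = avg (T - length r) (fun s => F (r ++ s)).
Proof.
  intros Hr. unfold mart_at_level. destruct (Nat.leb_spec T (length r)); [|reflexivity].
  replace (T - length r)%nat with O by lia. now rewrite avg_0, app_nil_r, firstn_all2 by lia.
Qed.

Lemma mart_at_level_nil F T : mart_at_level F T nil = avg T F.
Proof.
  rewrite mart_at_level_above by (simpl; lia). simpl length. rewrite Nat.sub_0_r.
  apply avg_ext. intros; now rewrite app_nil_l.
Qed.

Lemma mart_at_level_level F T r : length r = T -> mart_at_level F T r = F r.
Proof.
  intros Hr. rewrite mart_at_level_above, Hr, Nat.sub_diag, avg_0, app_nil_r by lia.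
  reflexivity.
Qed.

Lemma mart_at_level_ge F T d : (forall r, d <= F r) -> forall r, d <= mart_at_level F T r.
Proof.
  intros HF r. unfold mart_at_level. destruct (Nat.leb T (length r)); auto.
  rewrite <- (avg_const (T - length r) d). now apply avg_le.
Qed.

Lemma mart_at_level_split F T r : 2 * mart_at_level F T r =
  mart_at_level F T (r ++ false :: nil) + mart_at_level F T (r ++ true :: nil).
Proof.
  destruct (Nat.leb_spec T (length r)).
  - unfold mart_at_level. rewrite !length_app. simpl length.
    destruct (Nat.leb_spec T (length r)); try lia.
    destruct (Nat.leb_spec T (length r + 1)); try lia.
    rewrite !firstn_app. replace (T - length r)%nat with O by lia. simpl.
    rewrite !app_nil_r. ring.
  - rewrite !mart_at_level_above by (rewrite ?length_app; simpl; lia).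
    rewrite !length_app. simpl length.
    replace (T - length r)%nat with (S (T - (length r + 1))) by lia. rewrite avg_S.
    rewrite (avg_ext _ (fun s => F (r ++ false :: s)) (fun s => F ((r ++ false :: nil) ++ s)))
      by (intros; now rewrite <- app_assoc).
    rewrite (avg_ext _ (fun s => F (r ++ true :: s)) (fun s => F ((r ++ true :: nil) ++ s)))
      by (intros; now rewrite <- app_assoc).
    field.
Qed.

Lemma martingale_mart_at_level F T : (forall r, 0 <= F r) -> martingale (mart_at_level F T).
Proof. intros HF r. split; [apply mart_at_level_ge, HF | apply mart_at_level_split]. Qed.

Lemma martingale_plus X Y : martingale X -> martingale Y -> martingale (fun r => X r + Y r).
Proof. intros HX HY r. destruct (HX r), (HY r). split; lra. Qed.

Theorem lemma3p4 (S' : bstr -> R) (c : R) :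
  martingale S' ->
  Rbar_lt (CondVar S' nil) p_infty ->
  c > S' nil ->
  forall chat : R, 0 <= chat ->
  exists S : bstr -> R,
    martingale S /\
    S nil < c /\
    (forall rho, S rho > S' rho) /\
    (exists t : nat, forall rho, In rho (strings t) ->
       S rho > S' rho + chat * sqrt (real (CondVar S' rho))).
Proof.
  intros HS' Hfin Hc chat Hchat.
  set (eps := c - S' nil). set (eta := eps / (4 * (chat + 1))).
  assert (Heta : 0 < eta) by (apply Rdiv_lt_0_compat; unfold eps; lra).
  set (h := fun r => real (CondVar S' r)).
  destruct (avg_CondVar_vanishes S' nil HS' Hfin (eta ^ 2) (pow_lt _ 2 Heta)) as [T HT].
  change (avg T h < eta ^ 2) in HT.
  set (F := fun r => eps / 4 + chat * sqrt (h r)).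
  assert (HF : forall r, eps / 4 <= F r).
  { intros r. assert (0 <= chat * sqrt (h r)) by (apply Rmult_le_pos; auto using sqrt_pos).
    unfold F. lra. }
  assert (Hsqrt : avg T (fun r => sqrt (h r)) <= eta).
  { eapply Rle_trans; [apply avg_sqrt_le, real_CondVar_ge0|].
    rewrite <- (sqrt_pow2 eta) by lra. apply sqrt_le_1_alt. lra. }
  exists (fun r => S' r + mart_at_level F T r). split; [|split; [|split]].
  - apply martingale_plus, martingale_mart_at_level; [assumption|].
    intros r. specialize (HF r). unfold eps in *. lra.
  - rewrite mart_at_level_nil.
    rewrite (avg_ext T F (fun r => chat * sqrt (h r) + 0 + eps / 4)) by (intros; unfold F; ring).
    rewrite avg_affine, avg_const.
    assert (chat * avg T (fun r => sqrt (h r)) <= chat * eta)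
      by (apply Rmult_le_compat_l; assumption).
    assert ((chat + 1) * eta = eps / 4) by (unfold eta; field; lra).
    unfold eps in *. lra.
  - intros r. specialize (mart_at_level_ge F T _ HF r). unfold eps. lra.
  - exists T. intros r Hr.
    rewrite mart_at_level_level by now apply length_strings.
    unfold F, h, eps. lra.
Qed.
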